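(* Let $(\mathcal C,\mathbb E,\mathfrak s)$, $(\mathcal D,\mathbb F,\mathfrak t)$ be $n$-exangulated categories, $(\mathscr F,\Gamma),(\mathscr G,\Lambda)\colon(\mathcal C,\mathbb E,\mathfrak s)\to(\mathcal D,\mathbb F,\mathfrak t)$ $n$-exangulated functors, and $\beth\colon(\mathscr F,\Gamma)\Rightarrow(\mathscr G,\Lambda)$ an $n$-exangulated natural transformation. Then $\widetilde\beth$ is an $n$-exangulated natural transformation $(\widetilde{\mathscr F},\widetilde\Gamma)\Rightarrow(\widetilde{\mathscr G},\widetilde\Lambda)$ between functors $(\widetilde{\mathcal C},\widetilde{\mathbb E},\widetilde{\mathfrak s})\to(\widetilde{\mathcal D},\widetilde{\mathbb F},\widetilde{\mathfrak t})$.
   Context: $n\ge1$. An $n$-exangulated category $(\mathcal C,\mathbb E,\mathfrak s)$ (Herschend–Liu–Nakaoka) consists of an additive category $\mathcal C$, a biadditive functor $\mathbb E\colon\mathcal C^{\mathrm{op}}\times\mathcal C\to\mathsf{Ab}$, and an exact realisation $\mathfrak s$ of $\mathbb E$ satisfying (EA1), (EA2), (EA2$^{\mathrm{op}}$). Write $a_*\alpha=\mathbb E(C,a)(\alpha)$, $c^*\alpha=\mathbb E(c,A)(\alpha)$. An $n$-exangulated functor $(\mathscr F,\Gamma)$ is an additive functor with a natural transformation $\Gamma\colon\mathbb E(-,-)\Rightarrow\mathbb F(\mathscr F-,\mathscr F-)$ such that $\mathfrak s(\alpha)=[X_\bullet]$ implies $\mathfrak t(\Gamma(\alpha))=[\mathscr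 FX_\bullet]$. An $n$-exangulated natural transformation $(\mathscr F,\Gamma)\Rightarrow(\mathscr G,\Lambda)$ is a natural transformation $\beth\colon\mathscr F\Rightarrow\mathscr G$ such that $(\beth_A)_*\Gamma(\alpha)=(\beth_C)^*\Lambda(\alpha)$ for all $\alpha\in\mathbb E(C,A)$. Idempotent completion $\widetilde{\mathcal C}$: objects $(X,e)$, $e$ idempotent; morphisms $(e_Y,f,e_X)$ with $fe_X=f=e_Yf$; composition $(e_Z,g,e_Y)(e_Y,f,e_X)=(e_Z,gf,e_X)$. $\widetilde{\mathscr F}(X,e)=(\mathscr FX,\mathscr Fe)$, $\widetilde{\mathscr F}(e_Y,f,e_X)=(\mathscr Fe_Y,\mathscr Ff,\mathscr Fe_X)$; $\widetilde\beth_{(X,e)}=(\mathscr Ge,(\mathscr Ge)\beth_X(\mathscr Fe),\mathscr Fe)$. $\widetilde{\mathbb E}((C,e_C),(A,e_A))=\{(e_A,\alpha,e_C)\mid\alpha\in\mathbb E(C,A),(e_A)_*\alpha=\alpha=(e_C)^*\alpha\}$, with $\widetilde{\mathbb E}((e_C,d,e_D),(e_B,a,e_A))(e_A,\alpha,e_C)=(e_B,\mathbb E(d,a)(\alpha),e_D)$; $\widetilde{\mathfrak s}(e_A,\alpha,e_C)=[(X_\bullet,e_\bullet)]$ where $\mathfrak s(\alpha)=[X_\bullet]$, $e_\bullet$ is an idempotent chain endomorphism of $X_\bullet$ with $e_0=e_A$, $e_{n+1}=e_C$, and $(X_\bullet,e_\bullet)$ has terms $(X_i,e_i)$ and differentials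 $(e_{i+1},e_{i+1}d_i,e_i)$; this makes $(\widetilde{\mathcal C},\widetilde{\mathbb E},\widetilde{\mathfrak s})$ $n$-exangulated. $\widetilde\Gamma(e_A,\alpha,e_C)=(\mathscr Fe_A,\Gamma(\alpha),\mathscr Fe_C)$, similarly $\widetilde\Lambda$. *)

From HB Require Import structures.
From mathcomp Require Import all_boot all_algebra.
Set Implicit Arguments.
Unset Strict Implicit.
Unset Printing Implicit Defensive.
Import GRing.Theory.
Local Open Scope ring_scope.

Record precat := PreCat {
  Ob : Type;
  Mor : Ob -> Ob -> zmodType;
  cid : forall X, Mor X X;
  cmp : forall X Y Z, Mor Y Z -> Mor X Y -> Mor X Z;
  cmpA : forall X Y Z W (h : Mor Z W) (g : Mor Y Z) (f : Mor X Y),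
    cmp h (cmp g f) = cmp (cmp h g) f;
  cmp1m : forall X Y (f : Mor X Y), cmp (cid Y) f = f;
  cmpm1 : forall X Y (f : Mor X Y), cmp f (cid X) = f;
  cmpDr : forall X Y Z (g : Mor Y Z) (f1 f2 : Mor X Y),
    cmp g (f1 + f2) = cmp g f1 + cmp g f2;
  cmpDl : forall X Y Z (g1 g2 : Mor Y Z) (f : Mor X Y),
    cmp (g1 + g2) f = cmp g1 f + cmp g2 f }.
Arguments Mor : clear implicits.
Arguments cid {_} _.
Arguments cmp {_ _ _ _} _ _.

Definition is_zero_obj (C : precat) (Z : Ob C) : Prop :=
  forall X : Ob C, (forall f g : Mor C X Z, f = g) /\ (forall f g : Mor C Z X, f = g).

Definition is_biprod (C : precat) (X1 X2 P : Ob C)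
  (i1 : Mor C X1 P) (i2 : Mor C X2 P) (p1 : Mor C P X1) (p2 : Mor C P X2) : Prop :=
  [/\ cmp p1 i1 = cid X1, cmp p2 i2 = cid X2, cmp p1 i2 = 0, cmp p2 i1 = 0
    & cmp i1 p1 + cmp i2 p2 = cid P].

Definition is_additive (C : precat) : Prop :=
  (exists Z : Ob C, is_zero_obj Z) /\
  (forall X1 X2 : Ob C, exists P (i1 : Mor C X1 P) (i2 : Mor C X2 P)
     (p1 : Mor C P X1) (p2 : Mor C P X2), is_biprod i1 i2 p1 p2).

Definition idc (C : precat) (X Y : Ob C) (e : X = Y) : Mor C X Y :=
  match e in _ = Y' return Mor C X Y' with erefl => cid X end.

(* Biadditive functors E : C^op x C -> Ab.  Em c a = E(c,a). *)
Record bifun (C : precat) := BiFun {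
  Ex : Ob C -> Ob C -> zmodType;
  Em : forall X X' Y Y', Mor C X' X -> Mor C Y Y' -> Ex X Y -> Ex X' Y';
  Em_id : forall X Y (d : Ex X Y), Em (cid X) (cid Y) d = d;
  Em_comp : forall X X' X'' Y Y' Y'' (c : Mor C X' X) (c' : Mor C X'' X')
      (a : Mor C Y Y') (a' : Mor C Y' Y'') (d : Ex X Y),
    Em c' a' (Em c a d) = Em (cmp c c') (cmp a' a) d;
  Em_add : forall X X' Y Y' (c : Mor C X' X) (a : Mor C Y Y') (d1 d2 : Ex X Y),
    Em c a (d1 + d2) = Em c a d1 + Em c a d2;
  Em_addl : forall X X' Y Y' (c1 c2 : Mor C X' X) (a : Mor C Y Y') (d : Ex X Y),
    Em (c1 + c2) a d = Em c1 a d + Em c2 a d;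
  Em_addr : forall X X' Y Y' (c : Mor C X' X) (a1 a2 : Mor C Y Y') (d : Ex X Y),
    Em c (a1 + a2) d = Em c a1 d + Em c a2 d }.
Arguments Ex {_} _ _ _.
Arguments Em {_} _ {_ _ _ _} _ _ _.

Record addfun (C D : precat) := AddFun {
  Fo : Ob C -> Ob D;
  Fm : forall X Y, Mor C X Y -> Mor D (Fo X) (Fo Y);
  Fm_id : forall X, Fm (cid X) = cid (Fo X);
  Fm_comp : forall X Y Z (g : Mor C Y Z) (f : Mor C X Y),
    Fm (cmp g f) = cmp (Fm g) (Fm f);
  Fm_add : forall X Y (f g : Mor C X Y), Fm (f + g) = Fm f + Fm g }.
Arguments Fo {_ _} _ _.
Arguments Fm {_ _} _ {_ _} _.

Record extrans (C D : precat) (E : bifun C) (F : bifun D) (Ff : addfun C D) := ExTrans {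
  Gam : forall X Y, Ex E X Y -> Ex F (Fo Ff X) (Fo Ff Y);
  Gam_nat : forall X X' Y Y' (c : Mor C X' X) (a : Mor C Y Y') (d : Ex E X Y),
    Gam (Em E c a d) = Em F (Fm Ff c) (Fm Ff a) (Gam d);
  Gam_add : forall X Y (d1 d2 : Ex E X Y), Gam (d1 + d2) = Gam d1 + Gam d2 }.
Arguments Gam {_ _ _ _ _} _ {_ _} _.

(* (n+2)-term complexes X_0 -> X_1 -> ... -> X_{n+1} with X_0 = A,    *)
(* X_{n+1} = Z (entries/differentials beyond n+1 are irrelevant).      *)
Record cplx (C : precat) (n : nat) (A Z : Ob C) := Cplx {
  cob : nat -> Ob C;
  cd : forall i, Mor C (cob i) (cob i.+1);
  ce0 : cob 0 = A;
  ce1 : cob n.+1 = Z }.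
Arguments cplx : clear implicits.
Arguments cob {_ _ _ _} _ _.
Arguments cd {_ _ _ _} _ _.
Arguments ce0 {_ _ _ _} _.
Arguments ce1 {_ _ _ _} _.

Definition is_complex (C : precat) n (A Z : Ob C) (X : cplx C n A Z) : Prop :=
  forall i, (i < n)%N -> cmp (cd X i.+1) (cd X i) = 0.

Definition is_chainmap (C : precat) n (A Z A' Z' : Ob C) (X : cplx C n A Z)
  (Y : cplx C n A' Z') (f : forall i, Mor C (cob X i) (cob Y i)) : Prop :=
  forall i, (i <= n)%N -> cmp (f i.+1) (cd X i) = cmp (cd Y i) (f i).

Definition fixes_ends (C : precat) n (A Z : Ob C) (X Y : cplx C n A Z)
  (f : forall i, Mor C (cob X i) (cob Y i)) : Prop :=
  f 0 = idc (etrans (ce0 X) (esym (ce0 Y))) /\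
  f n.+1 = idc (etrans (ce1 X) (esym (ce1 Y))).

Definition homotopic (C : precat) n (A Z : Ob C) (X Y : cplx C n A Z)
  (f g : forall i, Mor C (cob X i) (cob Y i)) : Prop :=
  exists h : forall i, Mor C (cob X i.+1) (cob Y i),
    [/\ f 0 - g 0 = cmp (h 0) (cd X 0),
        (forall i, (i < n)%N ->
           f i.+1 - g i.+1 = cmp (cd Y i) (h i) + cmp (h i.+1) (cd X i.+1))
      & f n.+1 - g n.+1 = cmp (cd Y n) (h n)].

Definition htpy_equiv (C : precat) n (A Z : Ob C) (X Y : cplx C n A Z) : Prop :=
  exists (f : forall i, Mor C (cob X i) (cob Y i))
         (g : forall i, Mor C (cob Y i) (cob X i)),
    [/\ is_chainmap f /\ fixes_ends f, is_chainmap g /\ fixes_ends g,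
        homotopic (fun i => cmp (g i) (f i)) (fun i => cid (cob X i))
      & homotopic (fun i => cmp (f i) (g i)) (fun i => cid (cob Y i))].

(* A realization: s Z A d X  means  s(d) = [X]. *)
Definition realization (C : precat) (E : bifun C) (n : nat) :=
  forall (Z A : Ob C), Ex E Z A -> cplx C n A Z -> Prop.


Definition is_realization (C : precat) (E : bifun C) n (s : realization E n) : Prop :=
  forall Z A (d : Ex E Z A), exists X : cplx C n A Z,
    is_complex X /\ forall Y, s Z A d Y <-> (is_complex Y /\ htpy_equiv X Y).

Definition R0 (C : precat) (E : bifun C) n (s : realization E n) : Prop :=
  forall (A A' Z Z' : Ob C) (d : Ex E Z A) (d' : Ex E Z' A')
         (a : Mor C A A') (c : Mor C Z Z') (X : cplx C n A Z) (Y : cplx C n A' Z'),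
    Em E (cid Z) a d = Em E c (cid A') d' -> s Z A d X -> s Z' A' d' Y ->
    exists f : forall i, Mor C (cob X i) (cob Y i),
      [/\ is_chainmap f,
          f 0 = cmp (idc (esym (ce0 Y))) (cmp a (idc (ce0 X)))
        & f n.+1 = cmp (idc (esym (ce1 Y))) (cmp c (idc (ce1 X)))].

(* (X, d) is an n-exangle: the Mor-sequences ending in d^sharp / d_sharp are exact *)
Definition is_exangle (C : precat) (E : bifun C) n (A Z : Ob C)
  (X : cplx C n A Z) (d : Ex E Z A) : Prop :=
  [/\ is_complex X,
      (forall W : Ob C,
         (forall j, (j < n)%N -> forall g : Mor C W (cob X j.+1),
            cmp (cd X j.+1) g = 0 <-> exists f : Mor C W (cob X j), g = cmp (cd X j) f) /\
         (forall g : Mor C W (cob X n.+1),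
            Em E (cmp (idc (ce1 X)) g) (cid A) d = 0 <->
            exists f : Mor C W (cob X n), g = cmp (cd X n) f))
    & (forall W : Ob C,
         (forall j, (j < n)%N -> forall g : Mor C (cob X j.+1) W,
            cmp g (cd X j) = 0 <-> exists f : Mor C (cob X j.+2) W, g = cmp f (cd X j.+1)) /\
         (forall g : Mor C (cob X 0) W,
            Em E (cid Z) (cmp g (idc (esym (ce0 X)))) d = 0 <->
            exists f : Mor C (cob X 1) W, g = cmp f (cd X 0)))].

Definition R1 (C : precat) (E : bifun C) n (s : realization E n) : Prop :=
  forall Z A (d : Ex E Z A) (X : cplx C n A Z), s Z A d X -> is_exangle X d.

Definition R2 (C : precat) (E : bifun C) n (s : realization E n) : Prop :=
  (forall Z : Ob C, is_zero_obj Z -> forall (A : Ob C) (X : cplx C n A Z),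
     (forall i, (2 <= i <= n.+1)%N -> cob X i = Z) ->
     (exists e : cob X 1 = A, cd X 0 = cmp (idc (esym e)) (idc (ce0 X))) ->
     s Z A 0 X) /\
  (forall Z : Ob C, is_zero_obj Z -> forall (A : Ob C) (X : cplx C n Z A),
     (forall i, (i < n)%N -> cob X i = Z) ->
     (exists e : cob X n = A, cd X n = cmp (idc (esym (ce1 X))) (idc e)) ->
     s A Z 0 X).

Definition exact_realization (C : precat) (E : bifun C) n (s : realization E n) : Prop :=
  [/\ is_realization s, R0 s, R1 s & R2 s].

Definition is_inflation (C : precat) (E : bifun C) n (s : realization E n)
  (A B : Ob C) (f : Mor C A B) : Prop :=
  exists (Z : Ob C) (d : Ex E Z A) (X : cplx C n A Z), s Z A d X /\
    exists e : cob X 1 = B, f = cmp (idc e) (cmp (cd X 0) (idc (esym (ce0 X)))).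

Definition is_deflation (C : precat) (E : bifun C) n (s : realization E n)
  (B Z : Ob C) (g : Mor C B Z) : Prop :=
  exists (A : Ob C) (d : Ex E Z A) (X : cplx C n A Z), s Z A d X /\
    exists e : cob X n = B, g = cmp (idc (ce1 X)) (cmp (cd X n) (idc (esym e))).

Definition EA1 (C : precat) (E : bifun C) n (s : realization E n) : Prop :=
  (forall (A B B' : Ob C) (f : Mor C A B) (g : Mor C B B'),
     is_inflation s f -> is_inflation s g -> is_inflation s (cmp g f)) /\
  (forall (A B B' : Ob C) (f : Mor C A B) (g : Mor C B B'),
     is_deflation s f -> is_deflation s g -> is_deflation s (cmp g f)).

(* (EA2): (1_A, c) has a good lift f : X -> Y whose mapping cone M_f
   (M^0 = X^1, M^i = X^{i+1} (+) Y^i for 1<=i<=n, M^{n+1} = Y^{n+1})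
   realizes (d_X^0)_* d. *)
Definition EA2 (C : precat) (E : bifun C) n (s : realization E n) : Prop :=
  forall (Dd A Cc : Ob C) (d : Ex E Dd A) (c : Mor C Cc Dd)
         (X : cplx C n A Cc) (Y : cplx C n A Dd),
    s Cc A (Em E c (cid A) d) X -> s Dd A d Y ->
    exists f : forall i, Mor C (cob X i) (cob Y i),
      [/\ is_chainmap f,
          f 0 = idc (etrans (ce0 X) (esym (ce0 Y))),
          f n.+1 = cmp (idc (esym (ce1 Y))) (cmp c (idc (ce1 X)))
        & forall (M : cplx C n (cob X 1) Dd)
                 (i1 : forall i, Mor C (cob X i.+1) (cob M i))
                 (i2 : forall i, Mor C (cob Y i) (cob M i))
                 (p1 : forall i, Mor C (cob M i) (cob X i.+1))
                 (p2 : forall i, Mor C (cob M i) (cob Y i)),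
            (forall i, (1 <= i <= n)%N -> is_biprod (i1 i) (i2 i) (p1 i) (p2 i)) ->
            cd M 0 = cmp (i1 1) (cmp (- cd X 1) (idc (ce0 M)))
                     + cmp (i2 1) (cmp (f 1) (idc (ce0 M))) ->
            (forall i, (1 <= i < n)%N ->
               cd M i = cmp (i1 i.+1) (cmp (- cd X i.+1) (p1 i))
                        + cmp (i2 i.+1) (cmp (f i.+1) (p1 i) + cmp (cd Y i) (p2 i))) ->
            cd M n = cmp (idc (etrans (ce1 Y) (esym (ce1 M))))
                         (cmp (f n.+1) (p1 n) + cmp (cd Y n) (p2 n)) ->
            s Dd (cob X 1) (Em E (cid Dd) (cmp (cd X 0) (idc (esym (ce0 X)))) d) M].

(* (EA2^op): (a, 1_C) has a good lift f : Y -> X whose mapping cocone N^f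
   (N^0 = Y^0, N^{j+1} = Y^{j+1} (+) X^j for 0<=j<n, N^{n+1} = X^n)
   realizes (d_X^n)^* d. *)
Definition EA2op (C : precat) (E : bifun C) n (s : realization E n) : Prop :=
  forall (Cc A B : Ob C) (d : Ex E Cc A) (a : Mor C A B)
         (X : cplx C n B Cc) (Y : cplx C n A Cc),
    s Cc B (Em E (cid Cc) a d) X -> s Cc A d Y ->
    exists f : forall i, Mor C (cob Y i) (cob X i),
      [/\ is_chainmap f,
          f 0 = cmp (idc (esym (ce0 X))) (cmp a (idc (ce0 Y))),
          f n.+1 = idc (etrans (ce1 Y) (esym (ce1 X)))
        & forall (N : cplx C n A (cob X n))
                 (q1 : forall j, Mor C (cob Y j.+1) (cob N j.+1))
                 (q2 : forall j, Mor C (cob X j) (cob N j.+1))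
                 (r1 : forall j, Mor C (cob N j.+1) (cob Y j.+1))
                 (r2 : forall j, Mor C (cob N j.+1) (cob X j)),
            (forall j, (j < n)%N -> is_biprod (q1 j) (q2 j) (r1 j) (r2 j)) ->
            cd N 0 = cmp (q1 0) (cmp (- cd Y 0) (idc (etrans (ce0 N) (esym (ce0 Y)))))
                     + cmp (q2 0) (cmp (f 0) (idc (etrans (ce0 N) (esym (ce0 Y))))) ->
            (forall j, (j.+1 < n)%N ->
               cd N j.+1 = cmp (q1 j.+1) (cmp (- cd Y j.+1) (r1 j))
                           + cmp (q2 j.+1) (cmp (f j.+1) (r1 j) + cmp (cd X j) (r2 j))) ->
            (forall j (e : j.+1 = n),
               cd N j.+1 =
               cmp (idc (etrans (f_equal (cob X) e)
                          (etrans (esym (ce1 N)) (f_equal (fun k => cob N k.+1) (esym e)))))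
                   (cmp (f j.+1) (r1 j) + cmp (cd X j) (r2 j))) ->
            s (cob X n) A (Em E (cmp (idc (ce1 X)) (cd X n)) (cid A) d) N].

Definition nexangulated (C : precat) (E : bifun C) n (s : realization E n) : Prop :=
  [/\ is_additive C, exact_realization s, EA1 s, EA2 s & EA2op s].

Definition fcplx (C D : precat) (Ff : addfun C D) n (A Z : Ob C) (X : cplx C n A Z)
  : cplx D n (Fo Ff A) (Fo Ff Z) :=
  @Cplx D n (Fo Ff A) (Fo Ff Z) (fun i => Fo Ff (cob X i)) (fun i => Fm Ff (cd X i))
        (f_equal (Fo Ff) (ce0 X)) (f_equal (Fo Ff) (ce1 X)).

Definition exfunctor (C D : precat) (E : bifun C) (F : bifun D) n
  (s : realization E n) (t : realization F n) (Ff : addfun C D) (G : extrans E F Ff) : Prop :=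
  forall Z A (d : Ex E Z A) (X : cplx C n A Z),
    s Z A d X -> t (Fo Ff Z) (Fo Ff A) (Gam G d) (fcplx Ff X).

(* Bare data (no axioms) of categories, bifunctors, functors; used to  *)
(* state the n-exangulated natural transformation condition uniformly.*)
Record dcat := DCat {
  dob : Type;
  dhom : dob -> dob -> Type;
  did : forall X, dhom X X;
  dcmp : forall X Y Z, dhom Y Z -> dhom X Y -> dhom X Z }.
Arguments dhom : clear implicits.
Arguments did {_} _.
Arguments dcmp {_ _ _ _} _ _.

Record dbif (C : dcat) := DBif {
  dE : dob C -> dob C -> Type;
  dEm : forall X X' Y Y', dhom C X' X -> dhom C Y Y' -> dE X Y -> dE X' Y' }.
Arguments dE {_} _ _ _.
Arguments dEm {_} _ {_ _ _ _} _ _ _.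

Record dfun (C D : dcat) := DFun {
  dFo : dob C -> dob D;
  dFm : forall X Y, dhom C X Y -> dhom D (dFo X) (dFo Y) }.
Arguments dFo {_ _} _ _.
Arguments dFm {_ _} _ {_ _} _.

Definition dtrans (C D : dcat) (E : dbif C) (F : dbif D) (Ff : dfun C D) :=
  forall X Y, dE E X Y -> dE F (dFo Ff X) (dFo Ff Y).

Definition is_exnat (C D : dcat) (E : dbif C) (F : dbif D) (Ff Gf : dfun C D)
  (G : dtrans E F Ff) (L : dtrans E F Gf)
  (beth : forall X, dhom D (dFo Ff X) (dFo Gf X)) : Prop :=
  (forall X Y (f : dhom C X Y), dcmp (beth Y) (dFm Ff f) = dcmp (dFm Gf f) (beth X)) /\
  (forall (Cc A : dob C) (a : dE E Cc A),
     dEm F (did (dFo Ff Cc)) (beth A) (G Cc A a) =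
     dEm F (beth Cc) (did (dFo Gf A)) (L Cc A a)).
Arguments is_exnat {_ _} _ _ _ _ _ _ _.

Definition dcat_of (C : precat) : dcat :=
  @DCat (Ob C) (fun X Y => Mor C X Y : Type) (@cid C) (@cmp C).
Definition dbif_of (C : precat) (E : bifun C) : dbif (dcat_of C) :=
  @DBif (dcat_of C) (fun X Y => Ex E X Y : Type) (@Em C E).
Definition dfun_of (C D : precat) (Ff : addfun C D) : dfun (dcat_of C) (dcat_of D) :=
  @DFun (dcat_of C) (dcat_of D) (Fo Ff) (@Fm C D Ff).
Definition dtrans_of (C D : precat) (E : bifun C) (F : bifun D) (Ff : addfun C D)
  (G : extrans E F Ff) : dtrans (dbif_of E) (dbif_of F) (dfun_of Ff) :=
  fun X Y a => Gam G a.

(* Idempotent completion.                                              *)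
Record tob (C : precat) := TOb { tX : Ob C; te : Mor C tX tX; teP : cmp te te = te }.
Arguments tX {_} _.
Arguments te {_} _.

Definition tmor (C : precat) (P Q : tob C) :=
  {f : Mor C (tX P) (tX Q) | cmp f (te P) = f /\ cmp (te Q) f = f}.

Definition tid (C : precat) (P : tob C) : tmor P P :=
  exist _ (te P) (conj (teP P) (teP P)).

Lemma tcmp_proof (C : precat) (P Q R : tob C) (g : tmor Q R) (f : tmor P Q) :
  cmp (cmp (proj1_sig g) (proj1_sig f)) (te P) = cmp (proj1_sig g) (proj1_sig f) /\
  cmp (te R) (cmp (proj1_sig g) (proj1_sig f)) = cmp (proj1_sig g) (proj1_sig f).
Proof.
case: g => g [g1 g2]; case: f => f [f1 f2] /=.
by rewrite -cmpA f1 cmpA g2.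
Qed.

Definition tcmp (C : precat) (P Q R : tob C) (g : tmor Q R) (f : tmor P Q) : tmor P R :=
  exist _ (cmp (proj1_sig g) (proj1_sig f)) (tcmp_proof g f).

Definition tcat (C : precat) : dcat := @DCat (tob C) (@tmor C) (@tid C) (@tcmp C).

Definition tE (C : precat) (E : bifun C) (P Q : tob C) :=
  {a : Ex E (tX P) (tX Q) |
     Em E (cid (tX P)) (te Q) a = a /\ Em E (te P) (cid (tX Q)) a = a}.

Lemma tEm_proof (C : precat) (E : bifun C) (P P' Q Q' : tob C)
  (dd : tmor P' P) (aa : tmor Q Q') (x : tE E P Q) :
  Em E (cid (tX P')) (te Q') (Em E (proj1_sig dd) (proj1_sig aa) (proj1_sig x))
    = Em E (proj1_sig dd) (proj1_sig aa) (proj1_sig x) /\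
  Em E (te P') (cid (tX Q')) (Em E (proj1_sig dd) (proj1_sig aa) (proj1_sig x))
    = Em E (proj1_sig dd) (proj1_sig aa) (proj1_sig x).
Proof.
case: dd => dd [d1 d2]; case: aa => aa [a1 a2] /=.
by rewrite !Em_comp cmpm1 a2 d1 cmp1m.
Qed.

Definition tEm (C : precat) (E : bifun C) (P P' Q Q' : tob C)
  (dd : tmor P' P) (aa : tmor Q Q') (x : tE E P Q) : tE E P' Q' :=
  exist _ (Em E (proj1_sig dd) (proj1_sig aa) (proj1_sig x)) (tEm_proof dd aa x).

Definition tbif (C : precat) (E : bifun C) : dbif (tcat C) :=
  @DBif (tcat C) (@tE C E) (@tEm C E).

Lemma tFo_proof (C D : precat) (Ff : addfun C D) (P : tob C) :
  cmp (Fm Ff (te P)) (Fm Ff (te P)) = Fm Ff (te P).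
Proof. by rewrite -Fm_comp teP. Qed.

Definition tFo (C D : precat) (Ff : addfun C D) (P : tob C) : tob D :=
  @TOb D (Fo Ff (tX P)) (Fm Ff (te P)) (tFo_proof Ff P).

Lemma tFm_proof (C D : precat) (Ff : addfun C D) (P Q : tob C) (f : tmor P Q) :
  cmp (Fm Ff (proj1_sig f)) (te (tFo Ff P)) = Fm Ff (proj1_sig f) /\
  cmp (te (tFo Ff Q)) (Fm Ff (proj1_sig f)) = Fm Ff (proj1_sig f).
Proof. by case: f => f [f1 f2] /=; rewrite -!Fm_comp f1 f2. Qed.

Definition tFm (C D : precat) (Ff : addfun C D) (P Q : tob C) (f : tmor P Q)
  : tmor (tFo Ff P) (tFo Ff Q) :=
  exist _ (Fm Ff (proj1_sig f)) (tFm_proof Ff f).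

Definition tfun (C D : precat) (Ff : addfun C D) : dfun (tcat C) (tcat D) :=
  @DFun (tcat C) (tcat D) (tFo Ff) (@tFm C D Ff).

Lemma tGam_proof (C D : precat) (E : bifun C) (F : bifun D) (Ff : addfun C D)
  (G : extrans E F Ff) (P Q : tob C) (x : tE E P Q) :
  Em F (cid (tX (tFo Ff P))) (te (tFo Ff Q)) (Gam G (proj1_sig x)) = Gam G (proj1_sig x) /\
  Em F (te (tFo Ff P)) (cid (tX (tFo Ff Q))) (Gam G (proj1_sig x)) = Gam G (proj1_sig x).
Proof.
case: x => x [x1 x2] /=.
by rewrite -!Fm_id -!Gam_nat x1 x2.
Qed.

Definition ttrans (C D : precat) (E : bifun C) (F : bifun D) (Ff : addfun C D)
  (G : extrans E F Ff) : dtrans (tbif E) (tbif F) (tfun Ff) :=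
  fun P Q x => exist _ (Gam G (proj1_sig x)) (tGam_proof G x).

Lemma tnat_proof (C D : precat) (Ff Gf : addfun C D)
  (beth : forall X, Mor D (Fo Ff X) (Fo Gf X)) (P : tob C) :
  cmp (cmp (Fm Gf (te P)) (cmp (beth (tX P)) (Fm Ff (te P)))) (te (tFo Ff P))
    = cmp (Fm Gf (te P)) (cmp (beth (tX P)) (Fm Ff (te P))) /\
  cmp (te (tFo Gf P)) (cmp (Fm Gf (te P)) (cmp (beth (tX P)) (Fm Ff (te P))))
    = cmp (Fm Gf (te P)) (cmp (beth (tX P)) (Fm Ff (te P))).
Proof.
split => /=.
  by rewrite -!cmpA -Fm_comp teP.
by rewrite cmpA -Fm_comp teP.
Qed.

Definition tnat (C D : precat) (Ff Gf : addfun C D)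
  (beth : forall X, Mor D (Fo Ff X) (Fo Gf X)) (P : tob C)
  : tmor (tFo Ff P) (tFo Gf P) :=
  exist _ (cmp (Fm Gf (te P)) (cmp (beth (tX P)) (Fm Ff (te P)))) (tnat_proof beth P).

(** Everything is checked on underlying morphisms.  Naturality of beth gives
   [Gf e \o beth_X \o Ff e = beth_X \o Ff e] for an idempotent [e], so the
   component of the induced transformation at [(X, e)] is [beth_X \o Ff e].
   Elements of [E~((C,e_C),(A,e_A))] are fixed by [e_C] and [e_A], and [Gam],
   [Lam] carry this to [D] ([tGam_proof]); absorbing the idempotents reduces
   both conditions to those for beth. *)
From HB Require Import structures.
From mathcomp Require Import all_boot all_algebra.
From Stdlib Require Import ProofIrrelevance.

Lemma tmor_eq (C : precat) (P Q : tob C) (f g : tmor P Q) :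
  proj1_sig f = proj1_sig g -> f = g.
Proof.
case: f => f pf; case: g => g pg /= eq_fg; subst g.
by rewrite (proof_irrelevance _ pf pg).
Qed.

Lemma tE_eq (C : precat) (E : bifun C) (P Q : tob C) (x y : tE E P Q) :
  proj1_sig x = proj1_sig y -> x = y.
Proof.
case: x => x px; case: y => y py /= eq_xy; subst y.
by rewrite (proof_irrelevance _ px py).
Qed.

Lemma Em_cidl (C : precat) (E : bifun C) (X X' Y Y' : Ob C)
  (c : Mor C X' X) (a : Mor C Y Y') (d : Ex E X Y) :
  Em E c a d = Em E (cid X') a (Em E c (cid Y) d).
Proof. by rewrite Em_comp !cmpm1. Qed.

Section InducedTransformation.

Variables (C D : precat) (E : bifun C) (F : bifun D).
Variables (Ff Gf : addfun C D) (G : extrans E F Ff) (L : extrans E F Gf).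
Variable beth : forall X : Ob C, Mor D (Fo Ff X) (Fo Gf X).

Hypothesis beth_nat : forall X Y (f : Mor C X Y),
  cmp (beth Y) (Fm Ff f) = cmp (Fm Gf f) (beth X).

Hypothesis beth_ext : forall Z A (a : Ex E Z A),
  Em F (cid (Fo Ff Z)) (beth A) (Gam G a) = Em F (beth Z) (cid (Fo Gf A)) (Gam L a).

Lemma tnatE (P : tob C) :
  cmp (Fm Gf (te P)) (cmp (beth (tX P)) (Fm Ff (te P)))
  = cmp (beth (tX P)) (Fm Ff (te P)).
Proof. by rewrite cmpA -beth_nat -cmpA -Fm_comp teP. Qed.

Lemma tnat_natural (P Q : tob C) (f : tmor P Q) :
  tcmp (tnat beth Q) (tFm Ff f) = tcmp (tFm Gf f) (tnat beth P).
Proof.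
apply: tmor_eq; case: f => f [fP fQ] /=; rewrite !tnatE.
by rewrite -!cmpA -!Fm_comp fQ cmpA -beth_nat -cmpA -Fm_comp fP.
Qed.

Lemma tnat_ext (P Q : tob C) (x : tE E P Q) :
  tEm (tid (tFo Ff P)) (tnat beth Q) (ttrans G x) =
  tEm (tnat beth P) (tid (tFo Gf Q)) (ttrans L x).
Proof.
apply: tE_eq => /=; rewrite !tnatE.
have [GQ GP] := tGam_proof G x; have [LQ _] := tGam_proof L x.
rewrite /= in GQ GP LQ.
set a := sval x; set K := Em F (cid _) (beth (tX Q)) (Gam G a).
have absorbP : Em F (Fm Ff (te P)) (beth (tX Q)) (Gam G a) = K.
  by rewrite Em_cidl GP.
transitivity K.
  by rewrite -absorbP -[in RHS]GQ Em_comp cmp1m.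
have -> : Em F (cmp (beth (tX P)) (Fm Ff (te P))) (Fm Gf (te Q)) (Gam L a)
          = Em F (Fm Ff (te P)) (cid _) (Em F (beth (tX P)) (cid _) (Gam L a)).
  by rewrite -{2}LQ !Em_comp !cmp1m.
by rewrite -beth_ext Em_comp !cmp1m absorbP.
Qed.

End InducedTransformation.

Theorem lemma3p8 (n : nat) (hn : (1 <= n)%N)
  (C D : precat) (E : bifun C) (F : bifun D)
  (s : realization E n) (t : realization F n)
  (Ff Gf : addfun C D) (G : extrans E F Ff) (L : extrans E F Gf)
  (beth : forall X : Ob C, Mor D (Fo Ff X) (Fo Gf X)) :
  nexangulated s -> nexangulated t ->
  exfunctor s t G -> exfunctor s t L ->
  is_exnat (dbif_of E) (dbif_of F) (dfun_of Ff) (dfun_of Gf)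
           (dtrans_of G) (dtrans_of L) beth ->
  is_exnat (tbif E) (tbif F) (tfun Ff) (tfun Gf)
           (ttrans G) (ttrans L) (tnat beth).
Proof.
move=> _ _ _ _ [beth_nat beth_ext]; split.
- exact: tnat_natural.
- exact: tnat_ext beth_ext.
Qed.
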